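(* Let $A$ be a T-brace whose additive group is torsion-free. If $A$ is $\star$-hypercentral, then $A$ is abelian (i.e. $a\star b=0$, equivalently $ab=a+b$, for all $a,b\in A$).
   Context: A (left) brace is a set $A$ with two operations $+$ and $\cdot$ such that $(A,+)$ is an abelian group, $(A,\cdot)$ is a group, and $a(b+c)=ab+ac-a$ for all $a,b,c\in A$. Put $a\star b=ab-a-b$. A subbrace is a subset which is a subgroup of both $(A,+)$ and $(A,\cdot)$; a subbrace $L$ is an ideal if $a\star z, z\star a\in L$ for all $a\in A$, $z\in L$, and then the quotient brace $A/L$ is defined. $A$ is a T-brace if whenever $I$ is an ideal of $J$ and $J$ is an ideal of $A$, then $I$ is an ideal of $A$. The $\star$-center is $\zeta(\star,A)=\{a\in A: a\star x=x\star a=0 \ \forall x\in A\}$. The upper $\star$-central series: $\zeta_0(\star,A)=0$, $\zeta_{\alpha+1}(\star,A)/\zeta_\alpha(\star,A)=\zeta(\star,A/\zeta_\alpha(\star,A))$, unions at limit ordinals; its last term is $\zeta_\infty(\star,A)$. $A$ is $\star$-hypercentral if $A=\zeta_\infty(\star,A)$. *)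

From HB Require Import structures.
From mathcomp Require Import all_boot all_algebra.
Set Implicit Arguments. Unset Strict Implicit. Unset Printing Implicit Defensive.
Import GRing.Theory.
Local Open Scope ring_scope.

Record brace := Brace {
  bcar :> zmodType;
  bmul : bcar -> bcar -> bcar;
  binv : bcar -> bcar;
  bone : bcar;
  bmulA : forall a b c, bmul a (bmul b c) = bmul (bmul a b) c;
  bmul1l : forall a, bmul bone a = a;
  bmul1r : forall a, bmul a bone = a;
  bmulVl : forall a, bmul (binv a) a = bone;
  bmulVr : forall a, bmul a (binv a) = bone;
  bdistr : forall a b c, bmul a (b + c) = bmul a b + bmul a c - a
}.

Section BraceDefs.
Variable A : brace.

Definition star (a b : A) : A := bmul a b - a - b.

Definition subbrace (L : A -> Prop) : Prop :=
  (L 0 /\ (forall x y, L x -> L y -> L (x + y)) /\ (forall x, L x -> L (- x))) /\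
  (L (bone A) /\ (forall x y, L x -> L y -> L (bmul x y))
    /\ (forall x, L x -> L (binv x))).

Definition ideal_of (I J : A -> Prop) : Prop :=
  [/\ subbrace J, subbrace I, (forall z, I z -> J z)
    & forall a z, J a -> I z -> I (star a z) /\ I (star z a)].

Definition ideal (I : A -> Prop) : Prop := ideal_of I (fun _ => True).

Definition T_brace : Prop :=
  forall I J : A -> Prop, ideal_of I J -> ideal J -> ideal I.

Definition torsion_free : Prop := forall (a : A) (n : nat), a *+ n.+1 = 0 -> a = 0.

(* zeta_infty(star, A): the last term of the upper star-central series.
   zeta_{alpha+1} = {a | forall x, a*x, x*a in zeta_alpha}, zeta_0 = 0, unions
   at limits; its union is the least fixed point of the monotone operator
   Z |-> {0} u {a | forall x, a*x \in Z /\ x*a \in Z}, given inductively. *)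
Inductive hypercenter : A -> Prop :=
  | hyper_intro a :
      (a = 0 \/ forall x, hypercenter (star a x) /\ hypercenter (star x a)) ->
      hypercenter a.

Definition star_hypercentral : Prop := forall a : A, hypercenter a.

Definition brace_abelian : Prop := forall a b : A, star a b = 0.

End BraceDefs.

From HB Require Import structures.
From mathcomp Require Import all_boot all_algebra zify.
Set Implicit Arguments. Unset Strict Implicit. Unset Printing Implicit Defensive.
Import GRing.Theory.
Local Open Scope ring_scope.

(* Let a lie in the second star-center ζ_2. Then ζ + ℤa is an ideal of A and
   ℤa + ℤ(a⋆a) is an ideal of ζ + ℤa, so by the T-property it is an ideal of A:
   every x⋆a and a⋆x is an integer combination of a and a⋆a. Torsion-freeness
   turns this into a⋆a = 0 and then a ∈ ζ, i.e. ζ_2 = ζ. The hypercenter is the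
   least set containing every a all of whose products a⋆x, x⋆a lie in it, so
   induction puts all of A into ζ. The computations rest on the additivity of
   λ_a and on (uw)⋆x = u⋆(w⋆x) + w⋆x + u⋆x, which makes ⋆ additive in its left
   argument on ζ_2. *)

Section IntMultiples.
Variables (V W : zmodType) (P : V -> Prop).
Hypotheses (P0 : P 0) (PD : forall x y, P x -> P y -> P (x + y))
  (PN : forall x, P x -> P (- x)).

Lemma mulrz_closed x n : P x -> P (x *~ n).
Proof.
move=> Px; have PMn k : P (x *+ k) by elim: k => [|k IH]; rewrite ?mulr0n ?mulrS; auto.
by case: n => k; [rewrite -pmulrn | rewrite NegzE mulrNz -pmulrn]; auto.
Qed.

Lemma mulrz_morph (f : V -> W) :
    (forall x y, P x -> P y -> f (x + y) = f x + f y) ->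
  forall x n, P x -> f (x *~ n) = f x *~ n.
Proof.
move=> fD x n Px.
have fMn k : f (x *+ k) = f x *+ k.
  elim: k => [|k IH].
    by rewrite !mulr0n; apply/(addrI (f 0)); rewrite -fD // !addr0.
  by rewrite !mulrS fD ?IH //; apply: (mulrz_closed k).
case: n => k; first by rewrite -!pmulrn.
rewrite NegzE !mulrNz -!pmulrn -fMn; apply/eqP; rewrite -addr_eq0 -fD.
- by rewrite addNr -(mulr0n x) fMn mulr0n.
- exact: PN (mulrz_closed k.+1 Px).
- exact: (mulrz_closed k.+1 Px).
Qed.

End IntMultiples.

Section Lambda.
Variable A : brace.
Implicit Types a b u w x y z : A.

(* The map λ_a of brace theory; the brace axiom says exactly that it is additive. *)
Definition lam a x := bmul a x - a.

Lemma lamD a : {morph lam a : x y / x + y}.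
Proof. by move=> x y; rewrite /lam bdistr -addrA addrACA. Qed.

Lemma lam0 a : lam a 0 = 0.
Proof. by apply/(addrI (lam a 0)); rewrite -lamD !addr0. Qed.

HB.instance Definition _ a :=
  GRing.isNmodMorphism.Build A A (lam a) (conj (lam0 a) (lamD a)).

Lemma lamM u w x : lam (bmul u w) x = lam u (lam w x).
Proof. by rewrite [lam w x]/lam raddfB /= /lam -bmulA opprB subrKA. Qed.

Lemma starE a x : star a x = lam a x - x.
Proof. by []. Qed.

Lemma starDr a : {morph star a : x y / x + y}.
Proof. by move=> x y; rewrite !starE lamD opprD addrACA. Qed.

Lemma star0r a : star a 0 = 0.
Proof. by rewrite starE lam0 subr0. Qed.

HB.instance Definition _ a :=
  GRing.isNmodMorphism.Build A A (star a) (conj (star0r a) (starDr a)).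

Lemma bmulE a b : bmul a b = a + b + star a b.
Proof. by rewrite /star -(addrA _ (- a)) -opprD subrKC. Qed.

Lemma bmulr0 a : bmul a 0 = a.
Proof. by rewrite bmulE star0r !addr0. Qed.

Lemma bone_eq0 : bone A = 0.
Proof. by rewrite -[LHS]bmulr0 bmul1l. Qed.

Lemma bmul0r a : bmul 0 a = a.
Proof. by rewrite -bone_eq0 bmul1l. Qed.

Lemma star0l a : star 0 a = 0.
Proof. by rewrite /star bmul0r subr0 subrr. Qed.

Lemma starMl u w x :
  star (bmul u w) x = star u (star w x) + star w x + star u x.
Proof. by rewrite !starE lamM [lam u (_ - x)]raddfB /= subrK subrKA. Qed.

End Lambda.

Section StarCenter.
Variable A : brace.
Implicit Types w x y z : A.

Definition zeta1 z := forall x, star z x = 0 /\ star x z = 0.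
Definition zeta2 y := forall x, zeta1 (star y x) /\ zeta1 (star x y).

Lemma zeta1_0 : zeta1 0.
Proof. by move=> x; rewrite star0l star0r. Qed.

Lemma zeta1_zeta2 z : zeta1 z -> zeta2 z.
Proof. by move=> Hz x; rewrite (Hz x).1 (Hz x).2; split; apply: zeta1_0. Qed.

Lemma starDl_zeta1 y w x : zeta1 w -> star (y + w) x = star y x.
Proof.
move=> Hw; have -> : y + w = bmul y w by rewrite bmulE (Hw y).2 addr0.
by rewrite starMl (Hw x).1 star0r !add0r.
Qed.

Lemma starDl_zeta2 y1 y2 x : zeta2 y1 -> zeta2 y2 ->
  star (y1 + y2) x = star y1 x + star y2 x.
Proof.
move=> H1 H2; rewrite -(starDl_zeta1 _ x (H1 y2).1) -bmulE starMl.
by rewrite ((H2 x).1 y1).2 add0r addrC.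
Qed.

Lemma starNl_zeta2 y x : zeta2 y -> star (- y) x = - star y x.
Proof.
move=> Hy; have : star (bmul (- y) y) x = 0.
  by rewrite bmulE addNr starDl_zeta1 ?star0l //; apply: (Hy (- y)).2.
by rewrite starMl ((Hy x).1 (- y)).2 add0r addrC => /eqP; rewrite addr_eq0 => /eqP.
Qed.

Lemma zeta1D z1 z2 : zeta1 z1 -> zeta1 z2 -> zeta1 (z1 + z2).
Proof.
move=> H1 H2 x; rewrite starDl_zeta1 // starDr (H1 x).1 (H1 x).2 (H2 x).2.
by rewrite addr0.
Qed.

Lemma zeta1N z : zeta1 z -> zeta1 (- z).
Proof.
move=> Hz x; rewrite raddfN /= starNl_zeta2; last exact: zeta1_zeta2.
by rewrite (Hz x).1 (Hz x).2 oppr0.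
Qed.

Lemma zeta1Mz z n : zeta1 z -> zeta1 (z *~ n).
Proof. exact: (@mulrz_closed _ zeta1 zeta1_0 zeta1D zeta1N). Qed.

Lemma zeta2D y1 y2 : zeta2 y1 -> zeta2 y2 -> zeta2 (y1 + y2).
Proof.
move=> H1 H2 x; rewrite starDl_zeta2 // starDr.
by split; apply: zeta1D;
  [apply: (H1 x).1 | apply: (H2 x).1 | apply: (H1 x).2 | apply: (H2 x).2].
Qed.

Lemma zeta2N y : zeta2 y -> zeta2 (- y).
Proof.
move=> Hy x; rewrite starNl_zeta2 // raddfN.
by split; apply: zeta1N; [apply: (Hy x).1 | apply: (Hy x).2].
Qed.

Lemma zeta2Mz y n : zeta2 y -> zeta2 (y *~ n).
Proof. exact: (@mulrz_closed _ zeta2 (zeta1_zeta2 zeta1_0) zeta2D zeta2N). Qed.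

Lemma starMzl_zeta2 y x n : zeta2 y -> star (y *~ n) x = star y x *~ n.
Proof.
move=> Hy; apply: (mulrz_morph (zeta1_zeta2 zeta1_0) zeta2D zeta2N
  (f := fun y => star y x)) => // y1 y2.
exact: starDl_zeta2.
Qed.

End StarCenter.

Section StarIdeals.
Variable A : brace.
Implicit Types (S : A -> Prop) (a j s t x y z : A).

Lemma subbrace_star_closed S :
  S 0 -> (forall s t, S s -> S t -> S (s + t)) -> (forall s, S s -> S (- s)) ->
  (forall s t, S s -> S t -> S (star s t)) ->
  (forall s, S s -> S (star (binv s) s)) -> subbrace S.
Proof.
move=> S0 SD SN Sstar Sinv; split; first by [].
rewrite bone_eq0; split=> //; split=> [s t Ss St | s Ss].
  by rewrite bmulE; auto.
have: bmul (binv s) s = 0 by rewrite bmulVl bone_eq0.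
rewrite bmulE -addrA => /eqP; rewrite addr_eq0 => /eqP ->.
by auto.
Qed.

Lemma ideal_star_closed S :
  S 0 -> (forall s t, S s -> S t -> S (s + t)) -> (forall s, S s -> S (- s)) ->
  (forall x s, S s -> S (star x s) /\ S (star s x)) -> ideal S.
Proof.
move=> S0 SD SN Sstar; split=> //; last by move=> x s _; apply: Sstar.
apply: subbrace_star_closed => // [s t _ St | s Ss].
  exact: (Sstar s t St).1.
exact: (Sstar _ s Ss).1.
Qed.

Definition zeta1_adjoin a y := exists z (n : int), zeta1 z /\ y = z + a *~ n.

Definition int_span2 u v y := exists k l : int, y = u *~ k + v *~ l.

Lemma zeta1_sub_adjoin a z : zeta1 z -> zeta1_adjoin a z.
Proof. by exists z, 0; rewrite mulr0z addr0. Qed.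

Variable a : A.
Hypothesis a2 : zeta2 a.

Lemma zeta1_adjoin_zeta2 y : zeta1_adjoin a y -> zeta2 y.
Proof. by case=> z [n [Hz ->]]; apply: zeta2D; [apply: zeta1_zeta2 | apply: zeta2Mz]. Qed.

Lemma zeta1_adjoin_ideal : ideal (zeta1_adjoin a).
Proof.
apply: ideal_star_closed.
- exact/zeta1_sub_adjoin/zeta1_0.
- move=> _ _ [z1 [n1 [H1 ->]]] [z2 [n2 [H2 ->]]].
  by exists (z1 + z2), (n1 + n2); rewrite mulrzDr addrACA; split=> //; apply: zeta1D.
- move=> _ [z [n [Hz ->]]]; exists (- z), (- n).
  by rewrite mulrNz opprD; split=> //; apply: zeta1N.
- move=> x s /zeta1_adjoin_zeta2 Hs.
  by split; apply: zeta1_sub_adjoin; [exact: (Hs x).2 | exact: (Hs x).1].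
Qed.

Lemma star_adjoin j : zeta1_adjoin a j ->
  exists n : int, star j a = star a a *~ n /\ star a j = star a a *~ n.
Proof.
case=> z [n [Hz ->]]; exists n; split.
  by rewrite addrC starDl_zeta1 // starMzl_zeta2.
by rewrite raddfD raddfMz /= (Hz a).2 add0r.
Qed.

Lemma int_span2_ideal_of : ideal_of (int_span2 a (star a a)) (zeta1_adjoin a).
Proof.
have Hc : zeta1 (star a a) := (a2 a).1.
have span_sub y : int_span2 a (star a a) y -> zeta1_adjoin a y.
  case=> k [l ->]; exists (star a a *~ l), k.
  by rewrite addrC; split=> //; apply: zeta1Mz.
have span_star j y : zeta1_adjoin a j -> int_span2 a (star a a) y ->
    int_span2 a (star a a) (star j y) /\ int_span2 a (star a a) (star y j).
  move=> /star_adjoin [n [Eja Eaj]] [k [l ->]].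
  split; exists 0, (n * k); rewrite mulr0z add0r mulrzA.
    by rewrite raddfD !raddfMz /= (Hc j).2 mul0rz addr0 Eja.
  by rewrite starDl_zeta1 ?starMzl_zeta2 ?Eaj //; apply: zeta1Mz.
have [_ Jsub _ _] := zeta1_adjoin_ideal.
split=> //.
apply: subbrace_star_closed.
- by exists 0, 0; rewrite !mulr0z addr0.
- move=> _ _ [k1 [l1 ->]] [k2 [l2 ->]]; exists (k1 + k2), (l1 + l2).
  by rewrite !mulrzDr addrACA.
- by move=> _ [k [l ->]]; exists (- k), (- l); rewrite !mulrNz opprD.
- by move=> s t /span_sub Ss St; apply: (span_star s t Ss St).1.
- move=> s Ss; apply: (span_star _ s _ Ss).1.
  by case: Jsub => _ [_ [_ Jinv]]; apply/Jinv/span_sub.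
Qed.

Lemma T_brace_star_span : T_brace A -> forall x,
  int_span2 a (star a a) (star x a) /\ int_span2 a (star a a) (star a x).
Proof.
move=> HT x; have [_ _ _ Iideal] := HT _ _ int_span2_ideal_of zeta1_adjoin_ideal.
by apply: Iideal => //; exists 1, 0; rewrite mulr1z mulr0z addr0.
Qed.

End StarIdeals.

Section TorsionFree.
Variables (A : brace) (HT : T_brace A) (Htf : torsion_free A).

Lemma torsion_free_mulrz_eq0 (y : A) (n : int) : n != 0 -> y *~ n = 0 -> y = 0.
Proof.
case: n => [[|k]|k] // _; first by rewrite -pmulrn; apply: Htf.
by rewrite NegzE mulrNz -pmulrn => /eqP; rewrite oppr_eq0 => /eqP; apply: Htf.
Qed.

Lemma zeta1_of_mulrz (a : A) (n : int) :
  zeta2 a -> n != 0 -> zeta1 (a *~ n) -> zeta1 a.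
Proof.
move=> a2 n0 Hn x; split; apply: (torsion_free_mulrz_eq0 n0).
  by rewrite -starMzl_zeta2 //; apply: (Hn x).1.
by rewrite -raddfMz; apply: (Hn x).2.
Qed.

Lemma star_self_eq0 (a : A) : zeta2 a -> star a a = 0.
Proof.
move=> a2; have c1 : zeta1 (star a a) := (a2 a).1.
(* For 2a the span property reads 2(a⋆a) = 2k a + 4l (a⋆a): if k = 0 then
   a⋆a is torsion, otherwise 2k a is star-central. *)
have [[k [l E]] _] := T_brace_star_span (zeta2Mz 2 a2) HT a.
rewrite raddfMz starMzl_zeta2 // raddfMz /= -!mulrzA in E.
have [k0 | k_neq0] := eqVneq k 0.
  apply: (@torsion_free_mulrz_eq0 _ (2 - 2 * (2 * l))); first lia.
  by rewrite mulrzBr E k0 mulr0z add0r subrr.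
have a1 : zeta1 a.
  apply: (zeta1_of_mulrz (n := 2 * k) a2); first by rewrite mulf_neq0.
  by rewrite (canRL (addrK _) (esym E)) -mulrzBr; apply: zeta1Mz.
exact: (a1 a).1.
Qed.

Lemma zeta2_sub_zeta1 (a : A) : zeta2 a -> zeta1 a.
Proof.
move=> a2; have c0 := star_self_eq0 a2.
have span_a y : zeta1 y -> int_span2 a (star a a) y -> zeta1 a \/ y = 0.
  move=> Hy [k [l Ey]]; rewrite c0 mul0rz addr0 in Ey.
  have [k0 | k_neq0] := eqVneq k 0; first by right; rewrite Ey k0 mulr0z.
  by left; apply: (zeta1_of_mulrz a2 k_neq0); rewrite -Ey.
move=> x; have [Hxa Hax] := T_brace_star_span a2 HT x; split.
  by have [Ha | //] := span_a _ (a2 x).1 Hax; apply: (Ha x).1.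
by have [Ha | //] := span_a _ (a2 x).2 Hxa; apply: (Ha x).2.
Qed.

Lemma hypercenter_zeta1 (a : A) : hypercenter a -> zeta1 a.
Proof.
(* The generated induction principle gives no hypothesis for the recursive
   occurrences nested under [\/] and [/\], hence the explicit fixpoint. *)
move: a; fix IH 2 => a [b [-> | Hb]]; first exact: zeta1_0.
apply: zeta2_sub_zeta1 => x; case: (Hb x) => h1 h2.
by split; apply: IH.
Qed.

End TorsionFree.

Theorem corollary1 (A : brace) :
  T_brace A -> torsion_free A -> star_hypercentral A -> brace_abelian A.
Proof. by move=> HT Htf Hh a b; apply: (hypercenter_zeta1 HT Htf (Hh a) b).1. Qed.
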